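(* Let $x\ge3$ be a fixed integer. Let $\omega_n^-(x)$ be the number of square-free words of length $n$ over an $x$-letter alphabet, and $\psi_n(x)$ the number of those which contain every one of the $x$ letters. Then $$\lim_{n\to\infty}\frac{\log\psi_n(x)}{n}=\lim_{n\to\infty}\frac{\log\omega_n^-(x)}{n}.$$
   Context: A square is a nonempty word of the form $uu$; a word is square-free if no contiguous subword of it is a square. *)

From mathcomp Require Import all_boot.
From Stdlib Require Import Reals.
Set Implicit Arguments. Unset Strict Implicit. Unset Printing Implicit Defensive.

(* A word over T is a seq T.  The contiguous subword of w starting at
   position i of length 2l is the square uu (u nonempty, |u| = l) iff
   l > 0, i + 2l <= |w| and w[i..i+l) = w[i+l..i+2l). *)
Definition squarefree (T : eqType) (w : seq T) : bool :=
  [forall i : 'I_(size w).+1, forall l : 'I_(size w).+1,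
     ((0 < l) && (i + l + l <= size w))%N ==>
       (take l (drop i w) != take l (drop (i + l) w))].

Definition omega_minus (x n : nat) : nat :=
  #|[set t : n.-tuple 'I_x | squarefree t]|.

Definition psi (x n : nat) : nat :=
  #|[set t : n.-tuple 'I_x | squarefree t && [forall a : 'I_x, a \in t]]|.

(* Let v be a square-free word of length n >= x and let j be the
   least index such that at most j letters are absent from the suffix
   drop j v; by minimality exactly j letters are absent.  Overwriting the
   first j letters of v by these j distinct absent letters yields a
   square-free word of length n using every letter, because a square cannot
   start at a letter occurring only once.  The word v is recovered from this
   completion, from j <= x and from the first x letters of v, hence
   omega_n <= (x + 1) x^x psi_n <= (x + 1) x^x omega_n.  Since omega is
   submultiplicative, Fekete's lemma gives the limit of log omega_n / n, and
   log psi_n differs from log omega_n by a bounded amount. *)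

From Stdlib Require Import Reals Lra Classical.
From mathcomp Require Import all_boot zify.
Set Implicit Arguments. Unset Strict Implicit. Unset Printing Implicit Defensive.

Lemma squarefreeP (T : eqType) (w : seq T) :
  reflect (forall i l, 0 < l -> i + l + l <= size w ->
             take l (drop i w) != take l (drop (i + l) w))
          (squarefree w).
Proof.
apply: (iffP forallP) => [sqf i l l_gt0 fits | sqf i].
- have i_lt : i < (size w).+1 by lia.
  have l_lt : l < (size w).+1 by lia.
  by move: (sqf (Ordinal i_lt)) => /forallP /(_ (Ordinal l_lt)) /implyP; apply; apply/andP.
- by apply/forallP => l; apply/implyP => /andP [l_gt0 fits]; apply: sqf.
Qed.

Lemma squarefree_drop (T : eqType) (w : seq T) j : squarefree w -> squarefree (drop j w).
Proof.
move/squarefreeP => sqf; apply/squarefreeP => i l l_gt0; rewrite size_drop => fits.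
rewrite !drop_drop (_ : i + l + j = i + j + l); last lia.
by apply: sqf => //; lia.
Qed.

Lemma squarefree_take (T : eqType) (w : seq T) j : squarefree w -> squarefree (take j w).
Proof.
move/squarefreeP => sqf; apply/squarefreeP => i l l_gt0; rewrite size_take_min => fits.
have take_in k : k + l <= j -> take l (drop k (take j w)) = take l (drop k w).
  by move=> kl; rewrite !take_drop take_takel // addnC.
by rewrite !take_in; [apply: sqf => //; lia | lia | lia].
Qed.

(* A square starting inside [m] would begin with a letter of [m] that reappears
   [l] positions later, either inside [m] (impossible, [m] is uniq) or in [s]. *)
Lemma squarefree_cat_fresh (T : eqType) (m s : seq T) :
  uniq m -> [predI m & s] =1 pred0 -> squarefree s -> squarefree (m ++ s).
Proof.
move=> m_uniq fresh /squarefreeP sqf; apply/squarefreeP => i l l_gt0.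
rewrite size_cat => fits.
case: (leqP (size m) i) => [mi | im].
  rewrite !drop_cat ltnNge mi /= ltnNge (leq_trans mi (leq_addr _ _)) /=.
  rewrite (_ : i + l - size m = i - size m + l); last lia.
  by apply: sqf => //; lia.
case: m m_uniq fresh im fits => [//|a m'] m_uniq fresh im fits.
apply/eqP => /(congr1 (nth a ^~ 0)); rewrite !nth_take // !nth_drop addn0.
rewrite nth_cat im nth_cat; case: ltnP => [il | il] same.
  by move/eqP: same; rewrite nth_uniq //; lia.
have := fresh (nth a (a :: m') i); rewrite /= mem_nth // same mem_nth //; lia.
Qed.

Lemma leq_card_in_map (T1 T2 : finType) (A : {set T1}) (B : {set T2}) (f : T1 -> T2) :
  {in A &, injective f} -> {in A, forall a, f a \in B} -> #|A| <= #|B|.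
Proof.
move=> f_inj f_AB; rewrite -(card_in_imset f_inj); apply: subset_leq_card.
by apply/subsetP => _ /imsetP [a aA ->]; apply: f_AB.
Qed.

Lemma omega_minus_submul x m n :
  omega_minus x (m + n) <= omega_minus x m * omega_minus x n.
Proof.
rewrite /omega_minus -cardsX.
pose split_at (t : (m + n).-tuple 'I_x) :=
  (tcast (minn_idPl (leq_addr n m)) (take_tuple m t), tcast (addKn m n) (drop_tuple m t)).
apply: (@leq_card_in_map _ _ _ _ split_at).
  move=> t1 t2 _ _ [/(congr1 val) + /(congr1 val)]; rewrite /= !val_tcast /= => take12 drop12.
  by apply: val_inj; rewrite /= -(cat_take_drop m t1) take12 drop12 cat_take_drop.
by move=> t; rewrite !inE /= !val_tcast /= => sqf; rewrite squarefree_take ?squarefree_drop.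
Qed.

Lemma psi_le_omega_minus x n : psi x n <= omega_minus x n.
Proof. by apply/subset_leq_card/subsetP => t; rewrite !inE => /andP []. Qed.

Section Completion.
Variable x : nat.
Implicit Types v w : seq 'I_x.

Definition missing v : {set 'I_x} := [set a | a \notin v].

Lemma missing_drop_small v : exists j, #|missing (drop j v)| <= j.
Proof. by exists x; rewrite -[leqRHS]card_ord max_card. Qed.

Definition cut v : nat := ex_minn (missing_drop_small v).

Lemma missing_drop_subset v k : missing (drop k v) \subset missing (drop k.+1 v).
Proof.
apply/subsetP => a; rewrite !inE; apply: contra.
by rewrite -addn1 addnC -drop_drop => /mem_drop.
Qed.

Lemma cut_le v : cut v <= x.
Proof.
by rewrite /cut; case: ex_minnP => j _; apply; rewrite -[leqRHS]card_ord max_card.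
Qed.

Lemma card_missing_cut v : #|missing (drop (cut v) v)| = cut v.
Proof.
rewrite /cut; case: ex_minnP => j small least; apply/eqP; rewrite eqn_leq small.
case: j small least => [//|k] _ least.
have : ~~ (#|missing (drop k v)| <= k) by apply/negP => /least; rewrite ltnn.
by rewrite -ltnNge => /leq_trans; apply; apply/subset_leq_card/missing_drop_subset.
Qed.

Definition completion v : seq 'I_x :=
  enum (missing (drop (cut v) v)) ++ drop (cut v) v.

Lemma size_completion v : x <= size v -> size (completion v) = size v.
Proof.
move=> xv; rewrite size_cat -cardE card_missing_cut size_drop.
by have := cut_le v; lia.
Qed.

Lemma squarefree_completion v : squarefree v -> squarefree (completion v).
Proof.
move=> sqf; apply: squarefree_cat_fresh; rewrite ?enum_uniq ?squarefree_drop //.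
by move=> a /=; rewrite mem_enum inE; case: (a \in drop _ _).
Qed.

Lemma mem_completion v a : a \in completion v.
Proof. by rewrite mem_cat mem_enum inE; case: (a \in drop _ _). Qed.

Lemma completion_inj v w : x <= size v -> x <= size w ->
  cut v = cut w -> take x v = take x w -> completion v = completion w -> v = w.
Proof.
move=> xv xw cut_vw take_vw compl_vw.
have drop_vw : drop (cut v) v = drop (cut w) w.
  move/(congr1 (drop (cut v))): compl_vw.
  by rewrite /completion !drop_size_cat // -cardE card_missing_cut.
rewrite -(cat_take_drop (cut v) v) -(cat_take_drop (cut w) w) drop_vw -cut_vw.
by rewrite -(take_takel _ (cut_le v)) take_vw take_takel // cut_le.
Qed.

Variable n : nat.
Hypothesis xn : x <= n.

Definition completion_tuple (v : n.-tuple 'I_x) : n.-tuple 'I_x := insubd v (completion v).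

Lemma val_completion_tuple (v : n.-tuple 'I_x) : val (completion_tuple v) = completion v.
Proof. by rewrite val_insubd size_completion ?size_tuple // eqxx. Qed.

(* The completion together with [cut v] and the first [x] letters of [v]
   determines [v]. *)
Lemma omega_minus_le_psi : omega_minus x n <= x.+1 * x ^ x * psi x n.
Proof.
have -> : x.+1 * x ^ x = #|[set: 'I_x.+1 * x.-tuple 'I_x]|.
  by rewrite cardsT card_prod card_tuple !card_ord.
rewrite /omega_minus /psi -cardsX.
pose encode (v : n.-tuple 'I_x) :=
  ((inord (cut v) : 'I_x.+1, tcast (minn_idPl xn) (take_tuple x v)), completion_tuple v).
apply: (@leq_card_in_map _ _ _ _ encode).
  move=> v w _ _ [/(congr1 val) + /(congr1 val) + /(congr1 val)].
  rewrite /= !val_tcast !val_completion_tuple !inordK ?ltnS ?cut_le // => cut_vw take_vw compl_vw.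
  by apply/val_inj/(completion_inj _ _ cut_vw take_vw compl_vw); rewrite size_tuple.
move=> v; rewrite !inE /= val_completion_tuple => sqf.
rewrite squarefree_completion //=; apply/forallP => a.
by have := mem_completion v a; rewrite -val_completion_tuple.
Qed.

End Completion.

Local Open Scope R_scope.

Lemma ln_0 : ln 0 = 0.
Proof. by rewrite /ln; case: Rlt_dec => // lt00; case: (Rlt_irrefl 0). Qed.

Lemma ln_le a b : 0 < a -> a <= b -> ln a <= ln b.
Proof.
move=> a_gt0 /Rle_lt_or_eq_dec [ab|->]; last exact: Rle_refl.
by left; apply: ln_increasing.
Qed.

Lemma INR_ge1 (k : nat) : (0 < k)%N -> 1 <= INR k.
Proof. by case: k => // k _; rewrite S_INR; have := pos_INR k; lra. Qed.

Lemma ln_INR_ge0 (k : nat) : 0 <= ln (INR k).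
Proof.
case: (posnP k) => [->|k_gt0]; first by rewrite ln_0; exact: Rle_refl.
by rewrite -ln_1; apply: ln_le; [lra | exact: INR_ge1].
Qed.

Lemma ln_INR_le (p q : nat) : (p <= q)%N -> ln (INR p) <= ln (INR q).
Proof.
case: (posnP p) => [->|p_gt0] pq; first by rewrite ln_0; exact: ln_INR_ge0.
by apply: ln_le; [have := INR_ge1 p_gt0; lra | apply/le_INR/leP].
Qed.

Lemma ln_INR_mul_le (p q : nat) : ln (INR (p * q)) <= ln (INR p) + ln (INR q).
Proof.
have lnp_ge0 := ln_INR_ge0 p; have lnq_ge0 := ln_INR_ge0 q.
case: (posnP p) => [->|p_gt0]; first by rewrite mul0n ln_0; lra.
case: (posnP q) => [->|q_gt0]; first by rewrite muln0 ln_0; lra.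
have p_ge1 := INR_ge1 p_gt0; have q_ge1 := INR_ge1 q_gt0.
by rewrite mult_INR ln_mult; lra.
Qed.

Lemma div_INR_eventually_lt c eps :
  0 <= c -> 0 < eps -> exists N, forall n, (N <= n)%N -> c / INR n < eps.
Proof.
move=> c_ge0 eps_gt0.
have d_gt0 : 0 < eps / (c + 1) by apply: Rdiv_lt_0_compat; lra.
have [N [invN N_gt0]] := archimed_cor1 _ d_gt0.
exists N => n Nn.
have invn : / INR n <= / INR N by apply: Rinv_le_contravar; [exact: lt_0_INR | apply/le_INR/leP].
have : c * (eps / (c + 1)) = eps - eps / (c + 1) by field; lra.
have := Rmult_le_compat_l c _ _ c_ge0 invn.
have := Rmult_le_compat_l c _ _ c_ge0 (Rlt_le _ _ invN).
rewrite /Rdiv; lra.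
Qed.

Section Fekete.
Variable a : nat -> R.
Hypothesis a_ge0 : forall n, 0 <= a n.
Hypothesis a_subadd : forall m n, a (m + n)%N <= a m + a n.

Lemma subadd_mul_add q m r : a (q * m + r)%N <= INR q * a m + a r.
Proof.
elim: q => [|q IHq]; first by rewrite mul0n add0n /=; lra.
by rewrite mulSn -addnA S_INR; have := a_subadd m (q * m + r); lra.
Qed.

Lemma subadd_ratio_le m n : (0 < m)%N -> (0 < n)%N ->
  a n / INR n <= a m / INR m + (a 0%N + INR m * a 1%N) / INR n.
Proof.
move=> m_gt0 n_gt0.
have INRm_gt0 : 0 < INR m by apply/lt_0_INR/ltP.
have INRn_gt0 : 0 < INR n by apply/lt_0_INR/ltP.
have rem_le : a (n %% m) <= a 0%N + INR m * a 1%N.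
  have := subadd_mul_add (n %% m) 1 0; rewrite muln1 addn0.
  have : INR (n %% m) <= INR m by apply/le_INR/leP/ltnW/ltn_pmod.
  have := a_ge0 1; nra.
have quo_le : INR (n %/ m) * INR m <= INR n by rewrite -mult_INR; apply/le_INR/leP/leq_divM.
have := subadd_mul_add (n %/ m) m (n %% m); rewrite -divn_eq.
have -> : INR (n %/ m) * a m = INR (n %/ m) * INR m * (a m / INR m) by field; lra.
have : 0 <= a m / INR m by apply: Rle_mult_inv_pos.
move=> am_ge0 an_le; apply/(Rmult_le_reg_r (INR n)) => //.
rewrite Rmult_plus_distr_r /Rdiv !Rmult_assoc Rinv_l; last lra.
have := Rmult_le_compat_r (a m / INR m) _ _ am_ge0 quo_le; rewrite /Rdiv; lra.
Qed.

Lemma fekete : exists L, Un_cv (fun n => a n / INR n) L.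
Proof.
pose E y := exists n, (0 < n)%N /\ y = - (a n / INR n).
have E_bounded : bound E.
  exists 0 => _ [n [n_gt0 ->]].
  have : 0 <= a n / INR n by apply: Rle_mult_inv_pos => //; apply/lt_0_INR/ltP.
  lra.
have E_inhabited : exists y, E y by exists (- (a 1%N / INR 1)), 1%N.
have [M [M_ub M_least]] := @completeness E E_bounded E_inhabited.
exists (- M) => eps eps_gt0.
have L_le n : (0 < n)%N -> - M <= a n / INR n.
  by move=> n_gt0; have := M_ub _ (ex_intro _ n (conj n_gt0 erefl)); lra.
have [m [m_gt0 am_lt]] : exists m, (0 < m)%N /\ a m / INR m < - M + eps / 2.
  apply: NNPP => no_m.
  have : M <= M - eps / 2; last lra.
  apply: M_least => _ [n [n_gt0 ->]].
  have : ~ (a n / INR n < - M + eps / 2) by move=> lt; apply: no_m; exists n.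
  lra.
have B_ge0 : 0 <= a 0%N + INR m * a 1%N.
  by have := a_ge0 0; have := a_ge0 1; have := pos_INR m; nra.
have [N small] := div_INR_eventually_lt B_ge0 (ltac:(lra) : 0 < eps / 2).
exists (maxn N 1) => n /leP; rewrite geq_max => /andP [Nn n_gt0].
have := L_le n n_gt0; have := subadd_ratio_le m_gt0 n_gt0; have := small n Nn.
by rewrite /R_dist => *; apply: Rabs_def1; lra.
Qed.

End Fekete.

Lemma Un_cv_div_INR_close (u v : nat -> R) C N L :
  (forall n, (N <= n)%N -> Rabs (u n - v n) <= C) ->
  Un_cv (fun n => u n / INR n) L -> Un_cv (fun n => v n / INR n) L.
Proof.
move=> close u_cv eps eps_gt0.
have C_ge0 : 0 <= C by apply: Rle_trans (close N (leqnn N)); exact: Rabs_pos.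
have [N1 u_near] := u_cv _ (ltac:(lra) : 0 < eps / 2).
have [N2 small] := div_INR_eventually_lt C_ge0 (ltac:(lra) : 0 < eps / 2).
exists (maxn (maxn N N1) (maxn N2 1)) => n /leP.
rewrite !geq_max => /andP [/andP [Nn N1n] /andP [N2n n_gt0]].
have inv_ge0 : 0 <= / INR n by apply/Rlt_le/Rinv_0_lt_compat/lt_0_INR/ltP.
have hi := Rle_trans _ _ _ (Rle_abs _) (close n Nn).
have lo : - (u n - v n) <= C by apply: Rle_trans (close n Nn); rewrite -Rabs_Ropp; exact: Rle_abs.
have := Rabs_def2 _ _ (u_near n (elimT leP N1n)); have := small n N2n.
have := Rmult_le_compat_r _ _ _ inv_ge0 lo; have := Rmult_le_compat_r _ _ _ inv_ge0 hi.
rewrite /R_dist /Rdiv => *; apply: Rabs_def1; nra.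
Qed.

Theorem mainTheorem8 (x : nat) (hx : (3 <= x)%N) :
  exists L : R,
    Un_cv (fun n : nat => (ln (INR (psi x n)) / INR n)%R) L /\
    Un_cv (fun n : nat => (ln (INR (omega_minus x n)) / INR n)%R) L.
Proof.
have omega_subadd m n :
    ln (INR (omega_minus x (m + n))) <= ln (INR (omega_minus x m)) + ln (INR (omega_minus x n)).
  exact: Rle_trans (ln_INR_le (omega_minus_submul x m n)) (ln_INR_mul_le _ _).
have [L omega_cv] := fekete (fun n => ln_INR_ge0 _) omega_subadd.
exists L; split => //.
pose C := (x.+1 * x ^ x)%N.
apply: (@Un_cv_div_INR_close _ _ (ln (INR C)) x) omega_cv => n xn.
have psi_le := ln_INR_le (psi_le_omega_minus x n).
have omega_le := Rle_trans _ _ _ (ln_INR_le (omega_minus_le_psi xn)) (ln_INR_mul_le C (psi x n)).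
by apply: Rabs_le; have := ln_INR_ge0 C; split; lra.
Qed.
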